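(* Let $(X,d)$ be a compact metric space and $f\colon X\to X$ a continuous map. If $f$ has the shadowing property around $\overline{M(f)}$, then $f|_{\overline{M(f)}}\colon\overline{M(f)}\to\overline{M(f)}$ has the shadowing property.
   Context: $M(f)$ is the set of minimal points: $x$ such that $f$ restricted to $\overline{\{f^n(x):n\ge0\}}$ is minimal. For $S\subset X$, $f$ has the shadowing property around $S$ if for every $\epsilon>0$ there is $\delta>0$ such that every sequence $(x_i)_{i\ge0}\subset S$ with $d(f(x_i),x_{i+1})\le\delta$ for all $i$ admits $x\in X$ with $d(x_i,f^i(x))\le\epsilon$ for all $i$. The shadowing property for a map $g\colon Y\to Y$ is the same with $S=Y$ and the shadowing point required in $Y$. *)

From Stdlib Require Import Reals.
Open Scope R_scope.

Record is_metric {X : Type} (d : X -> X -> R) : Prop := {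
  metric_nonneg : forall x y, 0 <= d x y;
  metric_sep    : forall x y, d x y = 0 <-> x = y;
  metric_sym    : forall x y, d x y = d y x;
  metric_tri    : forall x y z, d x z <= d x y + d y z
}.

(* Compactness of a metric space (sequential compactness, equivalent for
   metric spaces): every sequence has a convergent subsequence. *)
Definition seq_converges {X : Type} (d : X -> X -> R) (u : nat -> X) (l : X) : Prop :=
  forall eps, 0 < eps -> exists N, forall n, (n >= N)%nat -> d (u n) l < eps.

Definition compact_metric {X : Type} (d : X -> X -> R) : Prop :=
  forall u : nat -> X, exists (phi : nat -> nat) (l : X),
    (forall n m, (n < m)%nat -> (phi n < phi m)%nat) /\
    seq_converges d (fun n => u (phi n)) l.

Definition continuous_map {X : Type} (d : X -> X -> R) (f : X -> X) : Prop :=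
  forall x eps, 0 < eps -> exists delta, 0 < delta /\
    forall y, d x y < delta -> d (f x) (f y) < eps.

Definition closure {X : Type} (d : X -> X -> R) (S : X -> Prop) : X -> Prop :=
  fun x => forall eps, 0 < eps -> exists y, S y /\ d x y < eps.

Definition is_closed {X : Type} (d : X -> X -> R) (S : X -> Prop) : Prop :=
  forall x, closure d S x -> S x.

Definition orbit {X : Type} (f : X -> X) (x : X) : X -> Prop :=
  fun y => exists n : nat, y = Nat.iter n f x.

Definition orbit_closure {X : Type} (d : X -> X -> R) (f : X -> X) (x : X) : X -> Prop :=
  closure d (orbit f x).

Definition minimal_on {X : Type} (d : X -> X -> R) (f : X -> X) (Y : X -> Prop) : Prop :=
  (exists y, Y y) /\
  forall Z : X -> Prop,
    (forall z, Z z -> Y z) -> (exists z, Z z) -> is_closed d Z ->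
    (forall z, Z z -> Z (f z)) ->
    forall y, Y y -> Z y.

Definition minimal_points {X : Type} (d : X -> X -> R) (f : X -> X) : X -> Prop :=
  fun x => minimal_on d f (orbit_closure d f x).

(* Shadowing property around S, with shadowing point in T (T = X for the
   "around S" notion; T = S for the shadowing property of the restriction). *)
Definition shadowing_around_in {X : Type} (d : X -> X -> R) (f : X -> X)
  (A T : X -> Prop) : Prop :=
  forall eps, 0 < eps -> exists delta, 0 < delta /\
    forall xs : nat -> X,
      (forall i, A (xs i)) ->
      (forall i, d (f (xs i)) (xs (Datatypes.S i)) <= delta) ->
      exists x, T x /\ forall i, d (xs i) (Nat.iter i f x) <= eps.

Definition shadowing_around {X : Type} (d : X -> X -> R) (f : X -> X)
  (S : X -> Prop) : Prop :=
  shadowing_around_in d f S (fun _ => True).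

Definition restriction_has_shadowing {X : Type} (d : X -> X -> R) (f : X -> X)
  (Y : X -> Prop) : Prop :=
  shadowing_around_in d f Y Y.

(* A pseudo-orbit in the closure of M(f) is close to a pseudo-orbit of minimal
   points. Minimal points are recurrent, so each jump of the latter can be
   reversed and any finite segment closes up into a periodic pseudo-orbit of
   minimal points. Shadowing around the closure of M(f) provides a point
   shadowing it; the points shadowing some shift of a periodic pseudo-orbit form
   a closed invariant set, which by Birkhoff's theorem contains a minimal point.
   Hence every finite segment is shadowed by a minimal point, and a cluster point
   of these shadows the whole pseudo-orbit and lies in the closure of M(f). *)

From Stdlib Require Import Reals Lra Lia List Cantor IndefiniteDescription Classical.
Open Scope R_scope.

Lemma strictly_increasing_ge (phi : nat -> nat) :
  (forall n m, (n < m)%nat -> (phi n < phi m)%nat) -> forall n, (n <= phi n)%nat.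
Proof.
  intros Hphi n. induction n as [|n IH]; [lia|].
  specialize (Hphi n (S n) (Nat.lt_succ_diag_r n)). lia.
Qed.

Section Metric.
Context {X : Type} (d : X -> X -> R).
Hypothesis Hd : is_metric d.

Lemma dist_refl x : d x x = 0.
Proof. now apply (metric_sep d Hd). Qed.

Lemma closure_incl (A : X -> Prop) x : A x -> closure d A x.
Proof. intros Hx e He. exists x. rewrite dist_refl. auto. Qed.

Lemma closure_mono (A B : X -> Prop) :
  (forall x, A x -> B x) -> forall x, closure d A x -> closure d B x.
Proof. intros HAB x Hx e He. destruct (Hx e He) as [y [Hy Hxy]]. eauto. Qed.

Lemma closure_closed (A : X -> Prop) : is_closed d (closure d A).
Proof.
  intros x Hx e He. destruct (Hx (e/2)) as [y [Hy Hxy]]; [lra|].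
  destruct (Hy (e/2)) as [z [Hz Hyz]]; [lra|].
  exists z. split; [exact Hz|]. pose proof (metric_tri d Hd x y z). lra.
Qed.

Lemma closed_complement_open (A : X -> Prop) y :
  is_closed d A -> ~ A y -> exists r, 0 < r /\ forall z, A z -> r <= d y z.
Proof.
  intros HA Hy. apply NNPP. intros Hno. apply Hy, HA. intros e He.
  apply NNPP. intros Hfar. apply Hno. exists e. split; [exact He|].
  intros z Hz. apply Rnot_lt_le. intros Hlt. apply Hfar. eauto.
Qed.

Lemma closed_union (A B : X -> Prop) :
  is_closed d A -> is_closed d B -> is_closed d (fun x => A x \/ B x).
Proof.
  intros HA HB x Hx. destruct (classic (A x)) as [HAx|HAx]; [now left|right].
  destruct (closed_complement_open A x HA HAx) as [r [Hr Hfar]].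
  apply HB. intros e He.
  destruct (Hx (Rmin e r)) as [y [[Hy|Hy] Hxy]]; [now apply Rmin_pos| |].
  - pose proof (Hfar y Hy). pose proof (Rmin_r e r). lra.
  - exists y. split; [exact Hy|]. pose proof (Rmin_l e r). lra.
Qed.

Lemma closed_finite_union (A : nat -> X -> Prop) n :
  (forall j, is_closed d (A j)) ->
  is_closed d (fun x => exists j, (j < n)%nat /\ A j x).
Proof.
  intros HA. induction n as [|n IH]; intros x Hx.
  - destruct (Hx 1 Rlt_0_1) as [y [[j [Hj _]] _]]. lia.
  - assert (Hx' : (exists j, (j < n)%nat /\ A j x) \/ A n x).
    { apply (closed_union _ _ IH (HA n)). revert x Hx. apply closure_mono.
      intros y [j [Hj Hy]]. destruct (Nat.eq_dec j n) as [->|Hjn]; [now right|].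
      left. exists j. split; [lia|exact Hy]. }
    destruct Hx' as [[j [Hj Hx']]|Hx']; [exists j|exists n]; split; auto; lia.
Qed.

Section Compact.
Hypothesis Hcpt : compact_metric d.

Lemma cluster_point (u : nat -> X) :
  exists l, forall eps, 0 < eps -> forall N, exists n, (N <= n)%nat /\ d (u n) l < eps.
Proof.
  destruct (Hcpt u) as [phi [l [Hphi Hconv]]]. exists l. intros eps Heps N.
  destruct (Hconv eps Heps) as [M HM]. exists (phi (Nat.max N M)). split.
  - pose proof (strictly_increasing_ge phi Hphi (Nat.max N M)). lia.
  - apply HM. lia.
Qed.

Lemma nested_closed_inter (K : nat -> X -> Prop) :
  (forall n, exists x, K n x) -> (forall n, is_closed d (K n)) ->
  (forall n m x, (n <= m)%nat -> K m x -> K n x) ->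
  exists x, forall n, K n x.
Proof.
  intros Hne Hcl Hdec. destruct (functional_choice _ Hne) as [u Hu].
  destruct (cluster_point u) as [l Hl]. exists l. intros m.
  apply Hcl. intros e He. destruct (Hl e He m) as [n [Hn Hnl]].
  exists (u n). split; [exact (Hdec m n _ Hn (Hu n))|].
  now rewrite (metric_sym d Hd).
Qed.

Lemma totally_bounded r :
  0 < r -> exists L : list X, forall y, exists c, In c L /\ d y c < r.
Proof.
  intros Hr. apply NNPP. intros Hno.
  assert (Hfar : forall L : list X, exists y, forall c, In c L -> r <= d y c).
  { intros L. apply NNPP. intros Hnone. apply Hno. exists L. intros y.
    apply NNPP. intros Hy. apply Hnone. exists y. intros c Hc.
    apply Rnot_lt_le. intros Hyc. apply Hy. eauto. }
  destruct (functional_choice _ Hfar) as [pick Hpick].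
  set (prefix := nat_rect (fun _ => list X) nil (fun _ L => pick L :: L)).
  set (u := fun n => pick (prefix n)).
  assert (Hin : forall m n, (m < n)%nat -> In (u m) (prefix n)).
  { intros m n Hmn. induction n as [|n IH]; [lia|]. simpl.
    destruct (Nat.eq_dec m n) as [->|Hne]; [now left|right; apply IH; lia]. }
  destruct (cluster_point u) as [l Hl].
  destruct (Hl (r/2) ltac:(lra) 0%nat) as [n [_ Hn]].
  destruct (Hl (r/2) ltac:(lra) (S n)) as [m [Hm Hml]].
  pose proof (Hpick (prefix m) (u n) (Hin n m Hm)) as Hsep.
  pose proof (metric_tri d Hd (u m) l (u n)) as Htri.
  rewrite (metric_sym d Hd l) in Htri. fold (u m) in Hsep. lra.
Qed.

Lemma countable_neighbourhood_base (x0 : X) :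
  exists U : nat -> X -> Prop,
    forall y r, 0 < r -> exists n, U n y /\ forall z, U n z -> d y z < r.
Proof.
  assert (Hnet : forall k : nat, exists L : list X,
             forall y, exists c, In c L /\ d y c < / INR (S k)).
  { intros k. apply totally_bounded, Rinv_0_lt_compat, lt_0_INR. lia. }
  destruct (functional_choice _ Hnet) as [net Hnet'].
  exists (fun n z => let (k, i) := Cantor.of_nat n in
                     d z (nth i (net k) x0) < / INR (S k)).
  intros y r Hr.
  destruct (archimed_cor1 (r/2)) as [k [Hk Hk0]]; [lra|].
  assert (Hkr : / INR (S k) <= r/2).
  { apply Rle_trans with (/ INR k); [|lra].
    apply Rinv_le_contravar; [apply lt_0_INR; lia|apply le_INR; lia]. }
  destruct (Hnet' k y) as [c [Hc Hyc]].
  destruct (In_nth (net k) c x0 Hc) as [i [_ Hi]].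
  exists (Cantor.to_nat (k, i)). rewrite Cantor.cancel_of_to, Hi. split; [exact Hyc|].
  intros z Hz. pose proof (metric_tri d Hd y c z) as Htri.
  rewrite (metric_sym d Hd c z) in Htri. lra.
Qed.

End Compact.
End Metric.

Section Dynamics.
Context {X : Type} (d : X -> X -> R) (f : X -> X).
Hypothesis Hd : is_metric d.
Hypothesis Hf : continuous_map d f.

Lemma iter_continuous n : continuous_map d (Nat.iter n f).
Proof.
  induction n as [|n IH]; intros x e He.
  - exists e. auto.
  - destruct (Hf (Nat.iter n f x) e He) as [r [Hr Hfr]].
    destruct (IH x r Hr) as [s [Hs Hits]].
    exists s. split; [exact Hs|]. intros y Hy. apply Hfr, Hits, Hy.
Qed.

Lemma closure_invariant (A : X -> Prop) :
  (forall y, A y -> A (f y)) -> forall x, closure d A x -> closure d A (f x).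
Proof.
  intros HA x Hx e He. destruct (Hf x e He) as [r [Hr Hfr]].
  destruct (Hx r Hr) as [y [Hy Hxy]]. exists (f y). auto.
Qed.

Definition closed_invariant (Z : X -> Prop) : Prop :=
  (exists z, Z z) /\ is_closed d Z /\ (forall z, Z z -> Z (f z)).

Definition pseudo_orbit (delta : R) (xs : nat -> X) : Prop :=
  forall i, d (f (xs i)) (xs (S i)) <= delta.

Definition shadows (eps : R) (xs : nat -> X) (x : X) : Prop :=
  forall i, d (xs i) (Nat.iter i f x) <= eps.

Lemma shadows_closed eps xs : is_closed d (shadows eps xs).
Proof.
  intros x Hx i. apply Rle_plus_epsilon. intros eta Heta.
  destruct (iter_continuous i x eta Heta) as [r [Hr Hir]].
  destruct (Hx r Hr) as [y [Hy Hxy]].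
  pose proof (Hy i) as Hyi. pose proof (Hir y Hxy) as Hclose.
  pose proof (metric_tri d Hd (xs i) (Nat.iter i f y) (Nat.iter i f x)) as Htri.
  rewrite (metric_sym d Hd (Nat.iter i f y)) in Htri. lra.
Qed.

Lemma pseudo_orbit_near (A : X -> Prop) delta xs :
  0 < delta -> (forall i, closure d A (xs i)) -> pseudo_orbit delta xs ->
  exists m, (forall i, A (m i)) /\ (forall i, d (xs i) (m i) < delta) /\
            pseudo_orbit (3 * delta) m.
Proof.
  intros Hdelta Hxs Hpo.
  assert (Hnear : forall i, exists y,
             A y /\ d (xs i) y < delta /\ d (f (xs i)) (f y) < delta).
  { intros i. destruct (Hf (xs i) delta Hdelta) as [r [Hr Hfr]].
    destruct (Hxs i (Rmin r delta)) as [y [Hy Hxy]]; [now apply Rmin_pos|].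
    pose proof (Rmin_l r delta) as Hr_le. pose proof (Rmin_r r delta) as Hdelta_le.
    exists y. split; [exact Hy|split; [lra|apply Hfr; lra]]. }
  destruct (functional_choice _ Hnear) as [m Hm].
  exists m. split; [intros i; apply Hm|split; [intros i; apply Hm|]]. intros i.
  destruct (Hm i) as [_ [_ Hfi]]. destruct (Hm (S i)) as [_ [HSi _]].
  pose proof (Hpo i) as Hstep.
  pose proof (metric_tri d Hd (f (m i)) (f (xs i)) (m (S i))) as Htri1.
  pose proof (metric_tri d Hd (f (xs i)) (xs (S i)) (m (S i))) as Htri2.
  rewrite (metric_sym d Hd (f (m i)) (f (xs i))) in Htri1. lra.
Qed.

Lemma orbit_closure_self x : orbit_closure d f x x.
Proof. apply (closure_incl d Hd). now exists 0%nat. Qed.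

Lemma orbit_closure_iter x n : orbit_closure d f x (Nat.iter n f x).
Proof. apply (closure_incl d Hd). now exists n. Qed.

Lemma orbit_closure_closed_invariant x : closed_invariant (orbit_closure d f x).
Proof.
  split; [|split].
  - exists x. apply orbit_closure_self.
  - apply (closure_closed d Hd).
  - apply closure_invariant. intros y [n ->]. now exists (S n).
Qed.

Lemma orbit_closure_least (Z : X -> Prop) x :
  is_closed d Z -> (forall z, Z z -> Z (f z)) -> Z x ->
  forall y, orbit_closure d f x y -> Z y.
Proof.
  intros Hcl Hinv Hx y Hy. apply Hcl. revert y Hy. apply closure_mono.
  intros y [n ->]. induction n; simpl; auto.
Qed.

Lemma minimal_set_points (Y : X -> Prop) z :
  closed_invariant Y -> minimal_on d f Y -> Y z -> minimal_points d f z.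
Proof.
  intros [_ [Hcl Hinv]] [_ Hmin] Hz. split; [exists z; apply orbit_closure_self|].
  pose proof (orbit_closure_least Y z Hcl Hinv Hz) as Hsub.
  intros Z HZ Hne HZcl HZinv y Hy. apply (Hmin Z); auto.
Qed.

Lemma minimal_points_invariant x : minimal_points d f x -> minimal_points d f (f x).
Proof.
  intros Hx. apply (minimal_set_points (orbit_closure d f x)); [|exact Hx|].
  - apply orbit_closure_closed_invariant.
  - apply (orbit_closure_iter x 1).
Qed.

Lemma minimal_points_iter n x :
  minimal_points d f x -> minimal_points d f (Nat.iter n f x).
Proof. intros Hx. induction n; simpl; auto using minimal_points_invariant. Qed.

Lemma minimal_point_recurrent m k eta :
  minimal_points d f m -> 0 < eta ->
  exists j, d (Nat.iter j f (Nat.iter k f m)) m < eta.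
Proof.
  intros [_ Hmin] Heta.
  destruct (orbit_closure_closed_invariant m) as [_ [Hcl Hinv]].
  assert (Hm : orbit_closure d f (Nat.iter k f m) m).
  { destruct (orbit_closure_closed_invariant (Nat.iter k f m)) as [Hne_k [Hcl_k Hinv_k]].
    apply (Hmin _); auto using orbit_closure_self.
    apply orbit_closure_least; auto using orbit_closure_iter. }
  destruct (Hm eta Heta) as [y [[j ->] Hy]]. exists j.
  now rewrite (metric_sym d Hd).
Qed.

End Dynamics.

Section MinimalSets.
Context {X : Type} (d : X -> X -> R) (f : X -> X).
Hypothesis Hd : is_metric d.
Hypothesis Hcpt : compact_metric d.

Lemma closed_invariant_minimal_subset (W : X -> Prop) :
  closed_invariant d f W ->
  exists Y, closed_invariant d f Y /\ minimal_on d f Y /\ forall y, Y y -> W y.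
Proof.
  intros HW. pose proof HW as [[x0 _] _].
  destruct (countable_neighbourhood_base d Hd Hcpt x0) as [U HU].
  set (avoids := fun (Z : X -> Prop) n => forall y, Z y -> ~ U n y).
  set (refines := fun n (K K' : X -> Prop) => closed_invariant d f K ->
    closed_invariant d f K' /\ (forall y, K' y -> K y) /\
    ((exists Z, closed_invariant d f Z /\ (forall y, Z y -> K y) /\ avoids Z n) ->
     avoids K' n)).
  assert (Hrefine : forall n, exists step, forall K, refines n K (step K)).
  { intros n. apply functional_choice. intros K.
    destruct (classic (exists Z, closed_invariant d f Z /\
                         (forall y, Z y -> K y) /\ avoids Z n)) as [[Z HZ]|Hno].
    - exists Z. intros _. destruct HZ as [HZ [HZK HZn]]. auto.
    - exists K. intros HK. split; [exact HK|split; [auto|now intros Hyes]]. }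
  destruct (functional_choice _ Hrefine) as [step Hstep].
  (* [K n] shrinks along an enumeration of a countable neighbourhood base; a
     point of the intersection outside a closed invariant subset [Z] would have
     been removed at the step of a basic neighbourhood missing [Z]. *)
  set (K := nat_rect (fun _ => X -> Prop) W step).
  assert (HK : forall n, closed_invariant d f (K n)).
  { induction n as [|n IH]; [exact HW|apply (Hstep n (K n) IH)]. }
  assert (HKdec : forall n m y, (n <= m)%nat -> K m y -> K n y).
  { intros n m y Hnm. induction Hnm as [|m Hnm IH]; auto.
    intros Hy. apply IH, (Hstep m (K m) (HK m)), Hy. }
  assert (Hne : exists y, forall n, K n y).
  { apply (nested_closed_inter d Hd Hcpt); auto; apply HK. }
  exists (fun y => forall n, K n y). split; [split; [|split]|split; [split|]].
  - exact Hne.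
  - intros x Hx n. apply (HK n). revert x Hx. apply closure_mono. auto.
  - intros z Hz n. apply (HK n), Hz.
  - exact Hne.
  - intros Z HZ HZne HZcl HZinv y Hy. apply NNPP. intros HZy.
    destruct (closed_complement_open d Z y HZcl HZy) as [r [Hr Hfar]].
    destruct (HU y r Hr) as [n [Hyn Hball]].
    assert (HZn : avoids Z n).
    { intros z Hz Hzn. pose proof (Hfar z Hz). pose proof (Hball z Hzn). lra. }
    apply (proj2 (proj2 (Hstep n (K n) (HK n)))) with y; [|exact (Hy (S n))|exact Hyn].
    exists Z. split; [split; auto|split; [intros; apply HZ|]]; auto.
  - intros y Hy. apply (Hy 0%nat).
Qed.

Hypothesis Hf : continuous_map d f.

Lemma closed_invariant_has_minimal_point (W : X -> Prop) :
  closed_invariant d f W -> exists z, W z /\ minimal_points d f z.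
Proof.
  intros HW.
  destruct (closed_invariant_minimal_subset W HW) as [Y [HY [HYmin HYW]]].
  pose proof HY as [[z Hz] _].
  exists z. split; [auto|exact (minimal_set_points d f Hd Y z HY HYmin Hz)].
Qed.

(* The points shadowing some shift of [h] form a closed invariant set, because
   the shifts of [h] are finitely many. *)
Lemma periodic_shadowed_by_minimal_point eps (h : nat -> X) L w :
  (1 <= L)%nat -> (forall i, h (i + L)%nat = h i) -> shadows d f eps h w ->
  exists z, minimal_points d f z /\ shadows d f eps h z.
Proof.
  intros HL Hper Hw.
  set (shift := fun j i => h (i + j)%nat).
  assert (Hshift : forall j y, shadows d f eps (shift j) y ->
                               shadows d f eps (shift (S j)) (f y)).
  { intros j y Hy i. specialize (Hy (S i)). unfold shift in *.
    rewrite Nat.iter_succ_r in Hy. now replace (i + S j)%nat with (S i + j)%nat by lia. }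
  assert (Hshift_iter : forall k j y, shadows d f eps (shift j) y ->
                         shadows d f eps (shift (k + j)%nat) (Nat.iter k f y)).
  { induction k as [|k IH]; intros j y Hy; [exact Hy|].
    apply (Hshift (k + j)%nat), IH, Hy. }
  assert (Hwrap : forall y, shadows d f eps (shift L) y -> shadows d f eps h y).
  { intros y Hy i. specialize (Hy i). unfold shift in Hy. now rewrite Hper in Hy. }
  set (W := fun y => exists j, (j < L)%nat /\ shadows d f eps (shift j) y).
  assert (HW : closed_invariant d f W).
  { split; [|split].
    - exists w, 0%nat. split; [lia|]. intros i. unfold shift. rewrite Nat.add_0_r. apply Hw.
    - apply closed_finite_union. intros j. apply (shadows_closed d f Hd Hf).
    - intros y [j [Hj Hy]]. apply Hshift in Hy.
      destruct (Nat.eq_dec (S j) L) as [HjL|HjL].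
      + exists 0%nat. split; [lia|]. intros i. unfold shift. rewrite Nat.add_0_r.
        rewrite HjL in Hy. now apply Hwrap.
      + exists (S j). split; [lia|exact Hy]. }
  destruct (closed_invariant_has_minimal_point W HW) as [z [[j [Hj Hz]] Hzmin]].
  exists (Nat.iter (L - j) f z). split; [now apply minimal_points_iter|].
  apply Hwrap. replace L with (L - j + j)%nat at 1 by lia. now apply Hshift_iter.
Qed.

End MinimalSets.

Section Chains.
Context {X : Type} (d : X -> X -> R) (f : X -> X) (A : X -> Prop).

Definition pseudo_chain (r : R) (n : nat) (g : nat -> X) : Prop :=
  (forall i, (i <= n)%nat -> A (g i)) /\
  (forall i, (i < n)%nat -> d (f (g i)) (g (S i)) <= r).

Definition chain_from_to (r : R) (n : nat) (a b : X) : Prop :=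
  exists g, pseudo_chain r n g /\ g 0%nat = a /\ g n = b.

Definition chain_app (n : nat) (g h : nat -> X) (i : nat) : X :=
  if Nat.leb i n then g i else h (i - n)%nat.

Lemma chain_app_l n g h i : (i <= n)%nat -> chain_app n g h i = g i.
Proof. intros Hi. unfold chain_app. now rewrite (proj2 (Nat.leb_le i n) Hi). Qed.

Lemma chain_app_r n g h i : (n < i)%nat -> chain_app n g h i = h (i - n)%nat.
Proof. intros Hi. unfold chain_app. now rewrite (proj2 (Nat.leb_gt i n) Hi). Qed.

Lemma pseudo_chain_app r n1 n2 g h :
  pseudo_chain r n1 g -> pseudo_chain r n2 h -> g n1 = h 0%nat ->
  pseudo_chain r (n1 + n2) (chain_app n1 g h).
Proof.
  intros [Hg Hgstep] [Hh Hhstep] Hjoin. split.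
  - intros i Hi. destruct (Nat.le_gt_cases i n1).
    + rewrite chain_app_l; auto.
    + rewrite chain_app_r by lia. apply Hh. lia.
  - intros i Hi. destruct (Nat.lt_trichotomy i n1) as [Hlt|[->|Hgt]].
    + rewrite !chain_app_l by lia. now apply Hgstep.
    + rewrite chain_app_l, chain_app_r, Hjoin by lia.
      rewrite Nat.sub_succ_l, Nat.sub_diag by lia. apply Hhstep. lia.
    + rewrite !chain_app_r by lia. rewrite Nat.sub_succ_l by lia.
      apply Hhstep. lia.
Qed.

Lemma chain_from_to_refl r a : A a -> chain_from_to r 0 a a.
Proof.
  intros Ha. exists (fun _ => a). repeat split; auto. intros i Hi. lia.
Qed.

Lemma chain_from_to_trans r n1 n2 a b c :
  chain_from_to r n1 a b -> chain_from_to r n2 b c -> chain_from_to r (n1 + n2) a c.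
Proof.
  intros [g [Hg [Hg0 Hgn]]] [h [Hh [Hh0 Hhn]]].
  exists (chain_app n1 g h). split; [apply pseudo_chain_app; congruence|split].
  - now rewrite chain_app_l by lia.
  - destruct n2 as [|n2].
    + rewrite Nat.add_0_r, chain_app_l by lia. congruence.
    + rewrite chain_app_r by lia. now replace (n1 + S n2 - n1)%nat with (S n2) by lia.
Qed.

Lemma pseudo_chain_periodic r L c :
  (1 <= L)%nat -> pseudo_chain r L c -> c L = c 0%nat ->
  (forall i, A (c (i mod L))) /\
  (forall i, d (f (c (i mod L))) (c (S i mod L)) <= r).
Proof.
  intros HL [Hc Hstep] Hcycle.
  assert (Hmod : forall i, (i mod L < L)%nat) by (intros; apply Nat.mod_upper_bound; lia).
  split; [intros i; apply Hc, Nat.lt_le_incl, Hmod|]. intros i.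
  rewrite <- Nat.add_1_r, <- Nat.Div0.add_mod_idemp_l, Nat.add_1_r.
  pose proof (Hmod i) as Hk. set (k := (i mod L)%nat) in *.
  destruct (Nat.eq_dec (S k) L) as [Hwrap|Hwrap].
  - pose proof (Hstep k Hk) as Hlast.
    rewrite Hwrap, Hcycle in Hlast. now rewrite Hwrap, Nat.Div0.mod_same.
  - rewrite Nat.mod_small by lia. now apply Hstep.
Qed.

Lemma chain_from_to_jump r a b : A a -> A b -> d (f a) b <= r -> chain_from_to r 1 a b.
Proof.
  intros Ha Hb Hab. exists (fun i => match i with 0%nat => a | _ => b end).
  repeat split; auto.
  - intros [|i] _; auto.
  - intros [|i] Hi; [exact Hab|lia].
Qed.

Hypothesis Hd : is_metric d.
Hypothesis HA : forall x, A x -> A (f x).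

Lemma chain_from_to_orbit r n a :
  0 <= r -> A a -> chain_from_to r n a (Nat.iter n f a).
Proof.
  intros Hr Ha. exists (fun i => Nat.iter i f a). repeat split.
  - intros i _. induction i; simpl; auto.
  - intros i _. simpl. now rewrite (dist_refl d Hd).
Qed.

Lemma chain_along_orbit r t a c :
  0 <= r -> A a -> A c -> d (f (Nat.iter t f a)) c <= r ->
  chain_from_to r (S t) a c.
Proof.
  intros Hr Ha Hc Hjump. rewrite <- Nat.add_1_r.
  apply chain_from_to_trans with (Nat.iter t f a).
  - now apply chain_from_to_orbit.
  - apply chain_from_to_jump; auto.
    clear Hjump. induction t; simpl; auto.
Qed.

End Chains.

Section MinimalChains.
Context {X : Type} (d : X -> X -> R) (f : X -> X).
Hypothesis Hd : is_metric d.
Hypothesis Hf : continuous_map d f.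

Local Notation M := (minimal_points d f).

(* Recurrence of [a] gives a way back to [a] and then a [3 delta]-jump to [f b];
   recurrence of [b] then leads from [f b] back to [b]. *)
Lemma minimal_chain_reverse delta a b :
  0 < delta -> M a -> M b -> d (f b) a <= 3 * delta ->
  exists n, (1 <= n)%nat /\ chain_from_to d f M (4 * delta) n a b.
Proof.
  intros Hdelta Ha Hb Hba.
  destruct (minimal_point_recurrent d f Hd Hf a 1 delta Ha Hdelta) as [t Ht].
  destruct (minimal_point_recurrent d f Hd Hf b 2 delta Hb Hdelta) as [j Hj].
  simpl in Ht, Hj. rewrite <- Nat.iter_succ_r in Ht, Hj. simpl in Ht, Hj.
  pose proof (minimal_points_invariant d f Hd Hf) as HM.
  exists (S t + S j)%nat. split; [lia|].
  apply chain_from_to_trans with (f b).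
  - apply chain_along_orbit; auto; [lra|].
    pose proof (metric_tri d Hd (f (Nat.iter t f a)) a (f b)) as Htri.
    rewrite (metric_sym d Hd a (f b)) in Htri. lra.
  - apply chain_along_orbit; auto; lra.
Qed.

Lemma minimal_pseudo_orbit_reverse delta (m : nat -> X) :
  0 < delta -> (forall i, M (m i)) -> pseudo_orbit d f (3 * delta) m ->
  forall N, exists n, (N <= n)%nat /\ chain_from_to d f M (4 * delta) n (m N) (m 0%nat).
Proof.
  intros Hdelta Hm Hpo N. induction N as [|N [n [Hn Hchain]]].
  - exists 0%nat. split; [lia|]. apply chain_from_to_refl, Hm.
  - destruct (minimal_chain_reverse delta (m (S N)) (m N)) as [k [Hk Hback]]; auto.
    exists (k + n)%nat. split; [lia|]. now apply chain_from_to_trans with (m N).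
Qed.

Lemma minimal_pseudo_orbit_cycle delta (m : nat -> X) N :
  0 < delta -> (forall i, M (m i)) -> pseudo_orbit d f (3 * delta) m ->
  exists c L, (N < L)%nat /\ pseudo_chain d f M (4 * delta) L c /\
              c L = c 0%nat /\ forall i, (i <= N)%nat -> c i = m i.
Proof.
  intros Hdelta Hm Hpo.
  destruct (minimal_pseudo_orbit_reverse delta m Hdelta Hm Hpo (S N))
    as [n [Hn [g [Hg [Hg0 Hgn]]]]].
  exists (chain_app (S N) m g), (S N + n)%nat. split; [lia|split; [|split]].
  - apply pseudo_chain_app; auto. split; [auto|].
    intros i _. pose proof (Hpo i). lra.
  - rewrite chain_app_r, chain_app_l by lia.
    now replace (S N + n - S N)%nat with n by lia.
  - intros i Hi. apply chain_app_l. lia.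
Qed.

End MinimalChains.

Section Shadowing.
Context {X : Type} (d : X -> X -> R) (f : X -> X).
Hypothesis Hd : is_metric d.
Hypothesis Hcpt : compact_metric d.
Hypothesis Hf : continuous_map d f.

Local Notation M := (minimal_points d f).

Lemma minimal_point_shadows_segment eps delta0 delta xs N :
  0 < delta -> 4 * delta <= delta0 -> delta <= eps / 2 ->
  (forall ys, (forall i, closure d M (ys i)) -> pseudo_orbit d f delta0 ys ->
              exists x, shadows d f (eps / 2) ys x) ->
  (forall i, closure d M (xs i)) -> pseudo_orbit d f delta xs ->
  exists z, M z /\ forall i, (i <= N)%nat -> d (xs i) (Nat.iter i f z) <= eps.
Proof.
  intros Hdelta Hdelta0 Hdelta_eps Hsh Hxs Hpo.
  destruct (pseudo_orbit_near d f Hd Hf M delta xs Hdelta Hxs Hpo)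
    as [m [Hm [Hxm Hmpo]]].
  destruct (minimal_pseudo_orbit_cycle d f Hd Hf delta m N Hdelta Hm Hmpo)
    as [c [L [HNL [Hc [Hcycle Hcm]]]]].
  destruct (pseudo_chain_periodic d f M (4 * delta) L c) as [Hh Hhpo]; auto; [lia|].
  set (h := fun i => c (i mod L)%nat) in *.
  assert (Hper : forall i, h (i + L)%nat = h i).
  { intros i. unfold h. replace (i + L)%nat with (i + 1 * L)%nat by lia.
    now rewrite Nat.Div0.mod_add. }
  destruct (Hsh h) as [w Hw].
  - intros i. apply (closure_incl d Hd), Hh.
  - intros i. apply Rle_trans with (4 * delta); [apply Hhpo|exact Hdelta0].
  - destruct (periodic_shadowed_by_minimal_point d f Hd Hcpt Hf (eps / 2) h L w)
      as [z [Hz Hzh]]; [lia|exact Hper|exact Hw|].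
    exists z. split; [exact Hz|]. intros i Hi.
    pose proof (Hzh i) as Hzi. unfold h in Hzi.
    rewrite Nat.mod_small, Hcm in Hzi by lia.
    pose proof (Hxm i) as Hxmi.
    pose proof (metric_tri d Hd (xs i) (m i) (Nat.iter i f z)) as Htri. lra.
Qed.

Lemma shadows_of_segment_limit (P : X -> Prop) eps xs :
  (forall N, exists z, P z /\ forall i, (i <= N)%nat -> d (xs i) (Nat.iter i f z) <= eps) ->
  exists x, closure d P x /\ shadows d f eps xs x.
Proof.
  intros Hseg. destruct (functional_choice _ Hseg) as [z Hz].
  destruct (cluster_point d Hcpt z) as [l Hl]. exists l. split.
  - intros e He. destruct (Hl e He 0%nat) as [n [_ Hn]].
    exists (z n). split; [apply Hz|]. now rewrite (metric_sym d Hd).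
  - intros i. apply Rle_plus_epsilon. intros eta Heta.
    destruct (iter_continuous d f Hf i l eta Heta) as [r [Hr Hir]].
    destruct (Hl r Hr i) as [n [Hin Hn]].
    pose proof (proj2 (Hz n) i Hin) as Hzi.
    rewrite (metric_sym d Hd) in Hn. pose proof (Hir _ Hn) as Hclose.
    pose proof (metric_tri d Hd (xs i) (Nat.iter i f (z n)) (Nat.iter i f l)) as Htri.
    rewrite (metric_sym d Hd (Nat.iter i f (z n))) in Htri. lra.
Qed.

End Shadowing.

Theorem lemma2p2 (X : Type) (d : X -> X -> R) (f : X -> X)
  (Hd : is_metric d) (Hcpt : compact_metric d) (Hf : continuous_map d f) :
  shadowing_around d f (closure d (minimal_points d f)) ->
  (forall x, closure d (minimal_points d f) x ->
             closure d (minimal_points d f) (f x)) /\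
  restriction_has_shadowing d f (closure d (minimal_points d f)).
Proof.
  intros Hsh. split.
  { apply (closure_invariant d f Hf). apply (minimal_points_invariant d f Hd Hf). }
  intros eps Heps.
  destruct (Hsh (eps / 2)) as [delta0 [Hdelta0 Hsh0]]; [lra|].
  pose proof (Rmin_l (delta0 / 4) (eps / 2)) as Hdelta_le.
  pose proof (Rmin_r (delta0 / 4) (eps / 2)) as Hdelta_eps.
  set (delta := Rmin (delta0 / 4) (eps / 2)) in *.
  assert (Hdelta : 0 < delta) by (apply Rmin_pos; lra).
  exists delta. split; [exact Hdelta|]. intros xs Hxs Hpo.
  apply (shadows_of_segment_limit d f Hd Hcpt Hf). intros N.
  apply (minimal_point_shadows_segment d f Hd Hcpt Hf eps delta0 delta); auto; [lra|].
  intros ys Hys Hyspo. destruct (Hsh0 ys Hys Hyspo) as [x [_ Hx]]. now exists x.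
Qed.
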